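(* Let $q$ be a positive integer, $k\ge1$, $p_1,\dots,p_k\ge1$ integers and $s_i,a_{ij},\nu$ integers. Suppose $B(n)=\lceil n/q\rceil$ formally satisfies the recursion $R(n)=\sum_{i=1}^k R\big(n-s_i-\sum_{j=1}^{p_i}R(n-a_{ij})\big)+\nu$, i.e. $B(n)=\sum_{i=1}^k B\big(n-s_i-\sum_{j=1}^{p_i}B(n-a_{ij})\big)+\nu$ for all integers $n$. Then $B$ also formally satisfies the recursion $$R'(n)=\sum_{i=1}^k R'\Big(n-s_i-\sum_{j=1}^{p_i}R'(n-a_{ij})\Big)+R'\big(n-1-R'(n-1)-R'(n-2)-\cdots-R'(n-q)\big)+\nu,$$ i.e. $B(n)=\sum_{i=1}^k B\big(n-s_i-\sum_{j}B(n-a_{ij})\big)+B\big(n-1-\sum_{t=1}^q B(n-t)\big)+\nu$ for all integers $n$. *)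

From Stdlib Require Import ZArith List.
Open Scope Z_scope.

Definition ceil_div (q n : Z) : Z := (n + q - 1) / q.

Definition sum1 (m : nat) (f : nat -> Z) : Z :=
  fold_right Z.add 0 (map f (seq 1 m)).

Definition rec_rhs (R : Z -> Z) (k : nat) (p : nat -> nat) (s : nat -> Z)
  (a : nat -> nat -> Z) (nu : Z) (n : Z) : Z :=
  sum1 k (fun i => R (n - s i - sum1 (p i) (fun j => R (n - a i j)))) + nu.

(** The window [ceil((n-1)/q) + ... + ceil((n-q)/q)] equals [n - 1] for every
    integer [n] (a form of Hermite's identity): sliding the window by one
    replaces [ceil((n-q)/q)] by [ceil(n/q)], which is one larger, and the
    window at [n = 1] consists of zeros.  So the additional term of the new
    recursion is [B(n - 1 - (n - 1)) = B(0) = 0], and the new recursion reduces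
    to the old one. *)

From Stdlib Require Import ZArith List Lia.
Open Scope Z_scope.

Lemma sum1_succ (m : nat) (f : nat -> Z) : sum1 (S m) f = sum1 m f + f (S m).
Proof.
  unfold sum1. rewrite seq_S, map_app, fold_right_app. simpl.
  replace (1 + m)%nat with (S m) by lia.
  induction (map f (seq 1 m)); simpl; lia.
Qed.

Lemma sum1_window_succ (f : Z -> Z) (n : Z) (m : nat) :
  sum1 m (fun t => f (n + 1 - Z.of_nat t))
  = sum1 m (fun t => f (n - Z.of_nat t)) + f n - f (n - Z.of_nat m).
Proof.
  induction m as [|m IHm].
  - unfold sum1; simpl. replace (n - 0) with n by lia. lia.
  - rewrite !sum1_succ, IHm.
    replace (n + 1 - Z.of_nat (S m)) with (n - Z.of_nat m) by lia. lia.
Qed.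

Lemma ceil_div_small (q n : Z) : 0 < q -> - q < n <= 0 -> ceil_div q n = 0.
Proof. intros Hq Hn. unfold ceil_div. apply Z.div_small. lia. Qed.

Lemma ceil_div_sub_period (q n : Z) : 0 < q -> ceil_div q n = ceil_div q (n - q) + 1.
Proof.
  intro Hq. unfold ceil_div.
  replace (n + q - 1) with (n - q + q - 1 + 1 * q) by lia.
  rewrite Z.div_add by lia. reflexivity.
Qed.

Lemma sum1_ceil_div_window_one (q : Z) (m : nat) : 0 < q -> Z.of_nat m <= q ->
  sum1 m (fun t => ceil_div q (1 - Z.of_nat t)) = 0.
Proof.
  intro Hq. induction m as [|m IHm]; intro Hm.
  - reflexivity.
  - rewrite sum1_succ, IHm, ceil_div_small by lia. reflexivity.
Qed.

Lemma sum1_ceil_div_window (q n : Z) : 0 < q ->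
  sum1 (Z.to_nat q) (fun t => ceil_div q (n - Z.of_nat t)) = n - 1.
Proof.
  intro Hq.
  set (W n := sum1 (Z.to_nat q) (fun t => ceil_div q (n - Z.of_nat t))).
  assert (Wsucc : forall n, W (n + 1) = W n + 1).
  { intro m. unfold W. rewrite sum1_window_succ, Z2Nat.id by lia.
    rewrite (ceil_div_sub_period q m Hq). lia. }
  assert (W1 : W 1 = 0) by (apply sum1_ceil_div_window_one; lia).
  change (W n = n - 1).
  replace n with (1 + (n - 1)) by lia.
  induction (n - 1) as [|z IHz|z IHz] using Z.peano_ind.
  - rewrite Z.add_0_r. exact W1.
  - replace (1 + Z.succ z) with (1 + z + 1) by lia. rewrite Wsucc. lia.
  - pose proof (Wsucc (1 + Z.pred z)) as Wpred.
    replace (1 + Z.pred z + 1) with (1 + z) in Wpred by lia. lia.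
Qed.

Theorem theorem5 (q : Z) (k : nat) (p : nat -> nat) (s : nat -> Z)
  (a : nat -> nat -> Z) (nu : Z) :
  0 < q ->
  (1 <= k)%nat ->
  (forall i, (1 <= i <= k)%nat -> (1 <= p i)%nat) ->
  (forall n : Z, ceil_div q n = rec_rhs (ceil_div q) k p s a nu n) ->
  forall n : Z,
    ceil_div q n =
      sum1 k (fun i => ceil_div q (n - s i - sum1 (p i) (fun j => ceil_div q (n - a i j))))
      + ceil_div q (n - 1 - sum1 (Z.to_nat q) (fun t => ceil_div q (n - Z.of_nat t)))
      + nu.
Proof.
  intros Hq _ _ Hrec n.
  rewrite sum1_ceil_div_window by exact Hq.
  replace (n - 1 - (n - 1)) with 0 by lia.
  rewrite (ceil_div_small q 0), Hrec by lia.
  unfold rec_rhs. lia.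
Qed.
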